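(* Consider a generalized linear model with data $\mathcal{D}=(X,\mathbf{y})$, $X\in\mathbb{R}^{n\times(p+1)}$ whose first column is the intercept column of ones, whose next $m$ columns are mandatory predictors, and whose remaining $p-m$ columns form the matrix $X_u\in\mathbb{R}^{n\times(p-m)}$. Suppose the log-likelihood depends on $(\beta_0,\boldsymbol{\beta})$ only through the linear predictor $\eta=\eta_0(\beta_0,\boldsymbol{\beta})+X_u\boldsymbol{\beta}_u\in\mathbb{R}^n$, where $\boldsymbol{\beta}_u\in\mathbb{R}^{p-m}$ are the non-mandatory coefficients and $\eta_0$ collects the intercept and mandatory contributions; write $-\frac1n\ell$ as a twice differentiable function of $\eta$ and let $H_\eta(\eta)=\nabla^2_{\eta\eta}\bigl(-\tfrac1n\ell\bigr)(\eta)$. Fix $\lambda\ge0$ and $\delta>0$. For $\mathbf{t}\in[0,1]^{p-m}$ let $T_{\mathbf{t}}=\mathrm{diag}(1,\dots,1,t_1,\dots,t_{p-m})$ (with $m$ leading ones), $\Gamma_{\mathbf{t}}=\sqrt{I-T_{\mathbf{t}}^2}$, $$h_{\delta,\lambda}(\mathbf{t},\beta_0,\boldsymbol{\beta})=-\tfrac1n\ell(\beta_0,T_{\mathbf{t}}\boldsymbol{\beta};\mathcal{D})+\lambda\|\boldsymbol{\beta}\|_2^2+\delta\|\Gamma_{\mathbf{t}}\boldsymbol{\beta}\|_2^2,\qquad f_{\delta,\lambda}(\mathbf{t})=\inf_{\beta_0,\boldsymbol{\beta}}h_{\delta,\lambda}(\mathbf{t},\beta_0,\boldsymbol{\beta}).$$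 Let $\mathcal{T}_k=\{\mathbf{t}\in[0,1]^{p-m}:\mathbf{1}^\top\mathbf{t}=k\}$ and $\mathcal{S}_k=\{\mathbf{s}\in\{0,1\}^{p-m}:\mathbf{1}^\top\mathbf{s}=k\}$. Assume $X_u^\top H_\eta(\eta)X_u\preceq 2\delta I$ for all $\eta$. Then for every fixed $(\beta_0,\boldsymbol{\beta})$ the map $\mathbf{t}\mapsto h_{\delta,\lambda}(\mathbf{t},\beta_0,\boldsymbol{\beta})$ is concave on $(0,1)^{p-m}$. Consequently $f_{\delta,\lambda}$ is concave on $(0,1)^{p-m}$ (and extends concavely to $\mathcal{T}_k$), so a minimizer of $\min_{\mathbf{t}\in\mathcal{T}_k}f_{\delta,\lambda}(\mathbf{t})$ can be chosen at a corner $\mathbf{s}\in\mathcal{S}_k$.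
   Context: $\preceq$ denotes the Loewner (positive semidefinite) order. $\ell$ is the GLM log-likelihood; $T_{\mathbf{t}}\boldsymbol{\beta}=(\beta_1,\dots,\beta_m,t_1\beta_{m+1},\dots,t_{p-m}\beta_p)$, so the linear predictor at $(\beta_0,T_{\mathbf{t}}\boldsymbol{\beta})$ is $\eta_0(\beta_0,\boldsymbol{\beta})+X_u(\mathbf{t}\odot\boldsymbol{\beta}_u)$, with $\odot$ the elementwise product. *)

From HB Require Import structures.
From mathcomp Require Import all_boot all_order all_algebra.
From mathcomp Require Import all_classical all_reals all_analysis.
Set Implicit Arguments. Unset Strict Implicit. Unset Printing Implicit Defensive.
Import Order.TTheory GRing.Theory Num.Theory.
Import numFieldNormedType.Exports.
Local Open Scope classical_set_scope.
Local Open Scope ring_scope.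

Section Defs.
Variable R : realType.

Definition ebasis (n : nat) (i : 'I_n) : 'cV[R]_n := delta_mx i 0.

Definition grad_comp (n : nat) (L : 'cV[R]_n -> R) (i : 'I_n) : 'cV[R]_n -> R :=
  fun eta => 'D_(ebasis i) L eta.

Definition hessian (n : nat) (L : 'cV[R]_n -> R) (eta : 'cV[R]_n) : 'M[R]_n :=
  \matrix_(i, j) 'D_(ebasis j) (grad_comp L i) eta.

Definition twice_differentiable (n : nat) (L : 'cV[R]_n -> R) : Prop :=
  (forall eta, differentiable L eta) /\
  (forall i eta, differentiable (grad_comp L i) eta).

Definition psd (n : nat) (A : 'M[R]_n) : Prop :=
  forall v : 'cV[R]_n, 0 <= (v^T *m A *m v) 0 0.
Definition loewner_le (n : nat) (A B : 'M[R]_n) : Prop := psd (B - A).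

Definition sqnorm (n : nat) (v : 'cV[R]_n) : R := \sum_i (v i 0) ^+ 2.

Definition Tdiag (m q : nat) (t : 'cV[R]_q) : 'rV[R]_(m + q) :=
  row_mx (const_mx 1) t^T.
Definition Tmat (m q : nat) (t : 'cV[R]_q) : 'M[R]_(m + q) := diag_mx (Tdiag m t).
Definition Gammat (m q : nat) (t : 'cV[R]_q) : 'M[R]_(m + q) :=
  diag_mx (\row_i Num.sqrt (1 - (Tdiag m t 0 i) ^+ 2)).

(* linear predictor: intercept column of ones, then X = [X_m | X_u] *)
Definition linpred (n m q : nat) (X : 'M[R]_(n, m + q)) (b0 : R)
  (b : 'cV[R]_(m + q)) : 'cV[R]_n := b0 *: const_mx 1 + X *m b.

(* h_{delta,lambda}(t, b0, b); L eta = -(1/n) loglik as a function of eta *)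
Definition hfun (n m q : nat) (L : 'cV[R]_n -> R) (X : 'M[R]_(n, m + q))
  (lam delta : R) (t : 'cV[R]_q) (b0 : R) (b : 'cV[R]_(m + q)) : R :=
  L (linpred X b0 (Tmat m t *m b)) + lam * sqnorm b
  + delta * sqnorm (Gammat m t *m b).

Definition ffun (n m q : nat) (L : 'cV[R]_n -> R) (X : 'M[R]_(n, m + q))
  (lam delta : R) (t : 'cV[R]_q) : \bar R :=
  ereal_inf (range (fun bb : R * 'cV[R]_(m + q) =>
                      (hfun L X lam delta t bb.1 bb.2)%:E)).

Definition open_cube (q : nat) : set 'cV[R]_q :=
  [set t | forall j, 0 < t j 0 < 1].
Definition Tk (q k : nat) : set 'cV[R]_q :=
  [set t | (forall j, 0 <= t j 0 <= 1) /\ \sum_j t j 0 = k%:R].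
Definition Sk (q k : nat) : set 'cV[R]_q :=
  [set s | (forall j, s j 0 = 0 \/ s j 0 = 1) /\ \sum_j s j 0 = k%:R].

Definition concave_on (q : nat) (S : set 'cV[R]_q) (g : 'cV[R]_q -> R) : Prop :=
  forall x y a, S x -> S y -> 0 <= a <= 1 ->
    (1 - a) * g x + a * g y <= g ((1 - a) *: x + a *: y).
Definition econcave_on (q : nat) (S : set 'cV[R]_q) (g : 'cV[R]_q -> \bar R)
  : Prop :=
  forall x y (a : R), S x -> S y -> 0 <= a <= 1 ->
    ((1 - a)%:E * g x + a%:E * g y <= g ((1 - a) *: x + a *: y)%R)%E.

End Defs.

(* Split beta into its mandatory and free parts (beta_m, beta_u).  Since
   T_t beta = (beta_m, t ⊙ beta_u) and |Gamma_t beta|^2 = |beta_u|^2 - |t ⊙ beta_u|^2,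
   for t in [0,1]^q the objective h(t) equals G (t ⊙ beta_u) plus a constant, where
   G u = L (eta_0 + X_u u) - delta |u|^2.  The Hessian of G is
   X_u^T H X_u - 2 delta I <= 0, so G is concave (second-derivative test along
   lines), hence so is h, as G composed with a linear map; the infimum f of
   concave functions is concave.  Finally a concave function on T_k is minimal at
   a vertex: in a point with a fractional coordinate there is a second one, and
   shifting mass between the two, in either direction until one of them becomes
   0 or 1, gives two points of T_k with fewer fractional coordinates whose
   segment contains the original point. *)

From HB Require Import structures.
From mathcomp Require Import all_boot all_order all_algebra.
From mathcomp Require Import all_classical all_reals all_analysis.
From mathcomp Require Import ring lra.
Import Order.TTheory GRing.Theory Num.Theory.
Import numFieldNormedType.Exports.
Set Implicit Arguments. Unset Strict Implicit. Unset Printing Implicit Defensive.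
Local Open Scope ring_scope.

Section LineRestriction.
Variables (R : realType) (n : nat).
Implicit Types (F : 'cV[R]_n -> R) (p w : 'cV[R]_n).

Lemma derive_ebasis F x w : differentiable F x ->
  'D_w F x = \sum_i w i 0 * 'D_(@ebasis R n i) F x.
Proof.
move=> dF; rewrite deriveE // {1}(matrix_sum_delta w) linear_sum /=.
apply: eq_bigr => i _; rewrite big_ord1 linearZ /= deriveE // /ebasis (ord1 ord0).
Qed.

Lemma is_derive_line F p w (s : R) : differentiable F (p + s *: w) ->
  is_derive s 1 (fun r : R => F (p + r *: w))
    (\sum_i w i 0 * 'D_(@ebasis R n i) F (p + s *: w)).
Proof.
move=> dF.
have line_quotient : (fun h : R => h^-1 *: (F (p + (h *: 1 + s) *: w) - F (p + s *: w)))
    = (fun h : R => h^-1 *: (F (h *: w + (p + s *: w)) - F (p + s *: w))).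
  by apply/funext => h; rewrite scaler1 scalerDl addrCA addrA.
apply: DeriveDef; first by rewrite /derivable /= line_quotient; exact: diff_derivable.
by rewrite /derive /= line_quotient -derive_ebasis.
Qed.

Variable L : 'cV[R]_n -> R.
Hypothesis L2 : twice_differentiable L.
Variables (p w : 'cV[R]_n).

Lemma is_derive2_line (s : R) :
  is_derive s 1 (fun r : R => \sum_i w i 0 * grad_comp L i (p + r *: w))
    ((w^T *m hessian L (p + s *: w) *m w) 0 0).
Proof.
have -> : (fun r : R => \sum_i w i 0 * grad_comp L i (p + r *: w))
    = \sum_i (fun r : R => w i 0 * grad_comp L i (p + r *: w)) by rewrite fct_sumE.
have form : (w^T *m hessian L (p + s *: w) *m w) 0 0 = \sum_i w i 0 *
    \sum_j w j 0 * 'D_(@ebasis R n j) (grad_comp L i) (p + s *: w).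
  rewrite mxE; under eq_bigr => j _ do rewrite mxE mulr_suml.
  rewrite exchange_big; apply: eq_bigr => i _; rewrite mulr_sumr.
  by apply: eq_bigr => j _; rewrite !mxE; ring.
rewrite form; apply: is_derive_sum => i; apply: is_deriveZ.
exact/is_derive_line/L2.2.
Qed.

Variable c : R.
Hypothesis hess_le : forall s, (w^T *m hessian L (p + s *: w) *m w) 0 0 <= 2 * c.

Lemma concave_line_sub_sqr (a : R) : 0 <= a <= 1 ->
  (1 - a) * L p + a * (L (p + w) - c) <= L (p + a *: w) - c * a ^+ 2.
Proof.
case/andP => a0 a1.
pose f s := c * s ^+ 2 - L (p + s *: w).
pose Df s := c * (2 * s) - \sum_i w i 0 * grad_comp L i (p + s *: w).
have sqr_derive (s : R) : is_derive s 1 (fun r : R => c * r ^+ 2) (c * (2 * s)).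
  apply: is_derive_eq (is_deriveZ c (is_deriveX 2 (is_derive_id s 1))) _.
  by rewrite /= expr1 /GRing.scale /=; ring.
have f_derive (s : R) : is_derive s 1 f (Df s).
  exact: is_deriveB (sqr_derive s) (is_derive_line (L2.1 _)).
have Df_derive (s : R) :
    is_derive s 1 Df (c * 2 - (w^T *m hessian L (p + s *: w) *m w) 0 0).
  apply: is_deriveB (is_derive2_line s).
  apply: is_derive_eq (is_deriveZ c (is_deriveZ 2 (is_derive_id s 1))) _.
  by rewrite /GRing.scale /=; ring.
have DfE : 'D_1 f = Df by apply/funext => s; rewrite derive_val.
have f_derivable x : derivable f x 1 by case: (f_derive x).
have Df_derivable x : derivable ('D_1 f) x 1 by rewrite DfE; case: (Df_derive x).
have f_cont x : {for x, continuous f}.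
  by apply/differentiable_continuous/derivable1_diffP; case: (f_derive x).
have Df_nonneg (x : R) : 0 < x < 1 -> 0 <= 'D_1 ('D_1 f) x.
  by move=> _; rewrite DfE derive_val subr_ge0 mulrC hess_le.
have [onem_ge0 onem_le1] : 0 <= 1 - a /\ 1 - a <= 1 by split; lra.
(* [conv t x y] is [t * x + (1 - t) * y], hence the weight [1 - a]. *)
have := @second_derivative_convex R f 0 1 Df_nonneg
  (cvg_at_left_filter (f_cont 1)) (cvg_at_right_filter (f_cont 0))
  (fun x _ => f_derivable x) (fun x _ => Df_derivable x)
  (Itv01 onem_ge0 onem_le1) ler01.
rewrite !convRE /= /unstable.onem /f !subKr scale0r scale1r addr0 expr0n expr1n /=.
rewrite !mulr0 add0r !mulr1; lra.
Qed.

End LineRestriction.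

Section QuadraticForms.
Variables (R : realType) (n : nat).
Implicit Types (v x d : 'cV[R]_n) (A B : 'M[R]_n).

Lemma sqnormE v : sqnorm v = (v^T *m v) 0 0.
Proof. by rewrite mxE; apply: eq_bigr => i _; rewrite mxE expr2. Qed.

Lemma sqnorm_line x d (s : R) :
  sqnorm (x + s *: d) = sqnorm x + 2 * s * (x^T *m d) 0 0 + s ^+ 2 * sqnorm d.
Proof.
rewrite /sqnorm mxE mulr_sumr mulr_sumr -!big_split /=.
by apply: eq_bigr => i _; rewrite !mxE; ring.
Qed.

Lemma form_scalar_mx (a : R) v : (v^T *m a%:M *m v) 0 0 = a * sqnorm v.
Proof. by rewrite mul_mx_scalar -scalemxAl mxE sqnormE. Qed.

Lemma loewner_le_form A B v : loewner_le A B ->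
  (v^T *m A *m v) 0 0 <= (v^T *m B *m v) 0 0.
Proof.
by move/(_ v); rewrite mulmxBr mulmxBl [X in 0 <= X]mxE [X in 0 <= _ + X]mxE subr_ge0.
Qed.

End QuadraticForms.

Lemma concave_sub_sqnorm (R : realType) (n q : nat) (L : 'cV[R]_n -> R)
    (A : 'M[R]_(n, q)) (eta0 : 'cV[R]_n) (delta : R) :
  twice_differentiable L ->
  (forall eta, loewner_le (A^T *m hessian L eta *m A) ((2 * delta)%:M)) ->
  concave_on setT (fun u => L (eta0 + A *m u) - delta * sqnorm u).
Proof.
move=> L2 hess_le x y a _ _ a01.
set d := y - x.
have -> : (1 - a) *: x + a *: y = x + a *: d.
  by apply/matrixP => i j; rewrite /d !mxE; ring.
have -> : y = x + 1 *: d by rewrite scale1r /d addrC addrNK.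
rewrite !sqnorm_line !mulmxDr -!scalemxAr !addrA scale1r.
have hess_line s : let eta := eta0 + A *m x + s *: (A *m d) in
    ((A *m d)^T *m hessian L eta *m (A *m d)) 0 0 <= 2 * (delta * sqnorm d).
  move=> eta; rewrite mulrA -form_scalar_mx trmx_mul !mulmxA.
  by have := loewner_le_form d (hess_le eta); rewrite !mulmxA.
have := concave_line_sub_sqr L2 hess_line a01.
lra.
Qed.

Definition closed_cube (R : realType) (q : nat) : set 'cV[R]_q :=
  [set t | forall j, 0 <= t j 0 <= 1]%classic.

Lemma closed_cube_conv (R : realType) (q : nat) (x y : 'cV[R]_q) (a : R) :
  closed_cube x -> closed_cube y -> 0 <= a <= 1 ->
  closed_cube ((1 - a) *: x + a *: y).
Proof.
move=> cx cy /andP[a0 a1] j; rewrite !mxE.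
by have /andP[x0 x1] := cx j; have /andP[y0 y1] := cy j; apply/andP; split; nra.
Qed.

Section Objective.
Variables (R : realType) (n m q : nat).
Implicit Types (t : 'cV[R]_q) (b : 'cV[R]_(m + q)).

Lemma Tmat_mulmx t b :
  Tmat m t *m b = col_mx (usubmx b) (diag_mx (dsubmx b)^T *m t).
Proof.
rewrite /Tmat /Tdiag diag_mx_row diag_const_mx -{1}[b]vsubmxK mul_block_col.
rewrite !mul0mx mul1mx addr0 add0r; congr col_mx.
by apply/matrixP => i j; rewrite (ord1 j) !mul_diag_mx !mxE mulrC.
Qed.

Lemma sqnorm_Gammat t b : closed_cube t ->
  sqnorm (Gammat m t *m b) = sqnorm (dsubmx b) - sqnorm (diag_mx (dsubmx b)^T *m t).
Proof.
move=> ct; rewrite /sqnorm /Gammat mul_diag_mx big_split_ord /= big1 => [|i _].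
  rewrite add0r -sumrB; apply: eq_bigr => j _.
  have /andP[t0 t1] := ct j.
  rewrite 2!mxE /Tdiag row_mxEr mxE mul_diag_mx !mxE exprMn sqr_sqrtr; first ring.
  by rewrite subr_ge0 expr_le1.
by rewrite 2!mxE /Tdiag row_mxEl mxE expr1n subrr sqrtr0 mul0r expr0n.
Qed.

Variables (L : 'cV[R]_n -> R) (X : 'M[R]_(n, m + q)) (lam delta : R).

Lemma hfunE t (b0 : R) b : closed_cube t ->
  let u := diag_mx (dsubmx b)^T *m t in
  hfun L X lam delta t b0 b =
    L (b0 *: const_mx 1 + lsubmx X *m usubmx b + rsubmx X *m u) - delta * sqnorm u
    + (lam * sqnorm b + delta * sqnorm (dsubmx b)).
Proof.
move=> ct u; rewrite /hfun /linpred Tmat_mulmx sqnorm_Gammat //.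
rewrite -{1}[X]hsubmxK mul_row_col addrA; ring.
Qed.

Hypothesis L2 : twice_differentiable L.
Hypothesis hess_le : forall eta,
  loewner_le ((rsubmx X)^T *m hessian L eta *m rsubmx X) ((2 * delta)%:M).

Lemma hfun_concave (b0 : R) b :
  concave_on (@closed_cube R q) (fun t => hfun L X lam delta t b0 b).
Proof.
move=> x y a cx cy a01; rewrite !hfunE //; last exact: closed_cube_conv.
have := concave_sub_sqnorm (b0 *: const_mx 1 + lsubmx X *m usubmx b) L2 hess_le
  (x := diag_mx (dsubmx b)^T *m x) (y := diag_mx (dsubmx b)^T *m y) I I a01.
by rewrite !mulmxDr -!scalemxAr; lra.
Qed.

End Objective.

Lemma lee_conv (R : realType) (x y x' y' : \bar R) (a : R) : 0 <= a <= 1 ->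
  (x <= x')%E -> (y <= y')%E ->
  ((1 - a)%:E * x + a%:E * y <= (1 - a)%:E * x' + a%:E * y')%E.
Proof.
case/andP => a0 a1 xx' yy'.
by apply: leeD; apply: lee_wpmul2l; rewrite // lee_fin subr_ge0.
Qed.

Lemma lee_conv_lbound (R : realType) (e x y : \bar R) (a : R) : 0 <= a <= 1 ->
  (e <= x)%E -> (e <= y)%E -> (e <= (1 - a)%:E * x + a%:E * y)%E.
Proof.
move=> a01 ex ey; apply: le_trans (lee_conv a01 ex ey).
have [a0 a1] := andP a01.
by rewrite -ge0_muleDl ?lee_fin ?subr_ge0 // -EFinD subrK mul1e.
Qed.

Lemma ereal_inf_concave (R : realType) (q : nat) (T : Type)
    (S : set 'cV[R]_q) (F : T -> 'cV[R]_q -> R) :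
  (forall x, concave_on S (F x)) ->
  econcave_on S (fun t => ereal_inf (range (fun x => (F x t)%:E))).
Proof.
move=> F_concave x y a Sx Sy a01; apply: le_ereal_inf_tmp => _ [z _ <-].
apply: le_trans (lee_conv a01 _ _) _; try by apply: ereal_inf_lbound; exists z.
by rewrite -!EFinM -EFinD lee_fin F_concave.
Qed.

Section Vertices.
Variables (R : realType) (q : nat).
Implicit Types (t : 'cV[R]_q) (A : {set 'I_q}) (i j : 'I_q).

Definition indicator A : 'cV[R]_q := \col_j (if j \in A then 1 else 0).
Definition fractional t : {set 'I_q} := [set j | 0 < t j 0 < 1].

Lemma sum_indicator A : \sum_j indicator A j 0 = #|A|%:R.
Proof.
rewrite (eq_bigr (fun j => if j \in A then 1 else 0)) => [|j _]; last by rewrite mxE.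
by rewrite -big_mkcond sumr_const.
Qed.

Lemma Sk_indicator A k : #|A| = k -> Sk k (indicator A).
Proof.
move=> cardA; split; last by rewrite sum_indicator cardA.
by move=> j; rewrite mxE; case: (j \in A); [right | left].
Qed.

Lemma boundary_itv01 (x : R) : 0 <= x <= 1 -> ~~ (0 < x < 1) -> x = 0 \/ x = 1.
Proof.
move=> /andP[x0 x1]; rewrite negb_and -!leNgt => /orP[] ?; [left | right]; lra.
Qed.

Lemma Tk_indicator k t : Tk k t -> fractional t = finset.set0 ->
  exists2 A : {set 'I_q}, #|A| = k & t = indicator A.
Proof.
move=> [t01 sum_t] no_frac.
have t_bool j : t j 0 = 0 \/ t j 0 = 1.
  apply: boundary_itv01; first exact: t01.
  by apply/negP => j_frac; move/setP/(_ j): no_frac; rewrite !inE j_frac.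
have t_ind : t = indicator [set j | t j 0 == 1].
  apply/matrixP => i j; rewrite (ord1 j) !mxE inE.
  by case: (t_bool i) => ->; rewrite ?eqxx // eq_sym oner_eq0.
exists [set j | t j 0 == 1] => //.
by apply/eqP; rewrite -(eqr_nat R) -sum_indicator -t_ind sum_t.
Qed.

Lemma fractional_pair k t i : Tk k t -> i \in fractional t ->
  exists2 j, j != i & j \in fractional t.
Proof.
move=> [t01 sum_t] i_frac.
have [j /andP[ji j_frac] | no_other] :=
  pickP (fun j => (j != i) && (j \in fractional t)); first by exists j.
exfalso; move: i_frac; rewrite inE => /andP[ti0 ti1].
pose is_one j : nat := t j 0 == 1.
set c := (\sum_(j | j != i) is_one j)%N.
have sum_others : \sum_(j | j != i) t j 0 = c%:R.
  rewrite natr_sum; apply: eq_bigr => j ji.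
  have := no_other j; rewrite ji inE /= => /negbT j_int.
  rewrite /is_one; case: (boundary_itv01 (t01 j) j_int) => ->.
    by rewrite eq_sym oner_eq0.
  by rewrite eqxx.
move: sum_t; rewrite (bigD1 i) //= sum_others.
have [kc|ck] := leqP k c.
  have : (k%:R : R) <= c%:R by rewrite ler_nat.
  lra.
have : ((c + 1)%:R : R) <= k%:R by rewrite ler_nat addn1.
rewrite natrD; lra.
Qed.

Definition transfer_step t i j : R := Num.min (1 - t i 0) (t j 0).
Definition transfer t i j : 'cV[R]_q :=
  t + transfer_step t i j *: \col_l ((l == i)%:R - (l == j)%:R).

Lemma transferE t i j l :
  transfer t i j l 0 = t l 0 + transfer_step t i j * ((l == i)%:R - (l == j)%:R).
Proof. by rewrite !mxE. Qed.

Lemma transfer_Tk k t i j : Tk k t -> i \in fractional t -> j \in fractional t ->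
  i != j ->
  [/\ Tk k (transfer t i j), fractional (transfer t i j) \proper fractional t
    & 0 < transfer_step t i j].
Proof.
move=> [t01 sum_t] i_frac j_frac ij.
move: (i_frac) (j_frac); rewrite !inE => /andP[ti0 ti1] /andP[tj0 tj1].
set s := transfer_step t i j.
have s_pos : 0 < s by rewrite lt_min !subr_gt0 ti1 tj0.
have [si sj] : s <= 1 - t i 0 /\ s <= t j 0 by split; rewrite ge_min lexx ?orbT.
have ji : (j == i) = false by rewrite eq_sym (negbTE ij).
split=> //; first split.
- move=> l; rewrite transferE -/s.
  have [->|li] := eqVneq l i; first by rewrite (negbTE ij) /=; apply/andP; split; lra.
  have [->|lj] := eqVneq l j; first by rewrite /=; apply/andP; split; lra.
  by rewrite subrr mulr0 addr0.
- under eq_bigr => l _ do rewrite transferE.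
  rewrite big_split /= -mulr_sumr sumrB.
  have sum_delta l0 : \sum_l ((l == l0)%:R : R) = 1.
    by rewrite (bigD1 l0) //= eqxx big1 ?addr0 // => l /negbTE ->.
  by rewrite !sum_delta subrr mulr0 addr0.
- apply/properP; split.
    apply/fintype.subsetP => l; rewrite !inE transferE.
    have [->|li] := eqVneq l i; first by rewrite ti0 ti1.
    have [->|lj] := eqVneq l j; first by rewrite tj0 tj1.
    by rewrite subrr mulr0 addr0.
  have [si_eq|sj_eq] : s = 1 - t i 0 \/ s = t j 0.
    by rewrite /s /transfer_step; case: leP; [left | right].
  + exists i => //; rewrite inE transferE -/s eqxx (negbTE ij) si_eq /=.
    by rewrite subr0 mulr1 subrKC ltxx andbF.
  + exists j => //; rewrite inE transferE -/s eqxx ji sj_eq /=.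
    by rewrite sub0r mulrN1 subrr ltxx.
Qed.

Lemma transfer_conv t i j :
  0 < transfer_step t i j -> 0 < transfer_step t j i ->
  let a := transfer_step t j i / (transfer_step t i j + transfer_step t j i) in
  0 <= a <= 1 /\ (1 - a) *: transfer t j i + a *: transfer t i j = t.
Proof.
move=> sij sji a; have s_pos : 0 < transfer_step t i j + transfer_step t j i.
  exact: addr_gt0.
split.
  by rewrite /a divr_ge0 ?(ltW sji) ?(ltW s_pos) //= ler_pdivrMr // mul1r lerDr ltW.
apply/matrixP => l c; rewrite (ord1 c) !mxE /a; field.
by rewrite gt_eqF.
Qed.

Variables (f : 'cV[R]_q -> \bar R) (k : nat).
Hypothesis f_concave : econcave_on (@Tk R q k) f.

Lemma concave_le_indicator N t : Tk k t -> (#|fractional t| <= N)%N ->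
  exists2 A : {set 'I_q}, #|A| = k & (f (indicator A) <= f t)%E.
Proof.
elim: N t => [|N IH] t Tt card_frac.
  have no_frac : fractional t = finset.set0 by apply/cards0_eq/eqP; rewrite -leqn0.
  by have [A cardA ->] := Tk_indicator Tt no_frac; exists A.
have [no_frac|/set0Pn[i i_frac]] := eqVneq (fractional t) finset.set0.
  by have [A cardA ->] := Tk_indicator Tt no_frac; exists A.
have [j ji j_frac] := fractional_pair Tt i_frac.
have ij : i != j by rewrite eq_sym.
have IH_transfer s : Tk k s -> fractional s \proper fractional t ->
    exists2 A : {set 'I_q}, #|A| = k & (f (indicator A) <= f s)%E.
  move=> Ts /proper_card lt_card; apply: (IH s Ts).
  by rewrite -ltnS (leq_trans lt_card).
have [Tij frac_ij sij] := transfer_Tk Tt i_frac j_frac ij.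
have [Tji frac_ji sji] := transfer_Tk Tt j_frac i_frac ji.
have [A1 cardA1 le1] := IH_transfer _ Tij frac_ij.
have [A2 cardA2 le2] := IH_transfer _ Tji frac_ji.
have [a01 t_conv] := transfer_conv sij sji.
have f_t := f_concave Tji Tij a01; rewrite t_conv in f_t.
have [le12|lt21] := leP (f (indicator A1)) (f (indicator A2)).
  exists A1 => //; apply: le_trans f_t; apply: lee_conv_lbound => //.
  exact: le_trans le2.
exists A2 => //; apply: le_trans f_t; apply: lee_conv_lbound => //.
exact: le_trans (ltW lt21) le1.
Qed.

Lemma concave_min_Sk : (k <= q)%N ->
  exists2 s, Sk k s & forall t, Tk k t -> (f s <= f t)%E.
Proof.
move=> le_kq.
have [A0 cardA0] : exists A0 : {set 'I_q}, #|A0| = k.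
  exists [set widen_ord le_kq x | x in 'I_k].
  by rewrite card_imset ?card_ord // => x y /(congr1 val) xy; apply: val_inj.
have [|A /eqP cardA A_min] :=
  @arg_minP _ _ _ A0 (fun A : {set 'I_q} => #|A| == k) (fun A => f (indicator A)).
  exact/eqP.
exists (indicator A); first exact: Sk_indicator.
move=> t Tt; have [B /eqP cardB le_Bt] := concave_le_indicator Tt (leqnn _).
exact: le_trans (A_min _ cardB) le_Bt.
Qed.

End Vertices.

Theorem theorem1 (R : realType) (n m q : nat) (L : 'cV[R]_n -> R)
  (X : 'M[R]_(n, m + q)) (lam delta : R) :
  twice_differentiable L ->
  0 <= lam -> 0 < delta ->
  (forall eta : 'cV[R]_n,
     loewner_le ((rsubmx X)^T *m hessian L eta *m rsubmx X)
                ((2 * delta)%:M)) ->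
  (forall (b0 : R) (b : 'cV[R]_(m + q)),
     concave_on (@open_cube R q) (fun t => hfun L X lam delta t b0 b)) /\
  econcave_on (@open_cube R q) (ffun L X lam delta) /\
  (forall k : nat, econcave_on (@Tk R q k) (ffun L X lam delta)) /\
  (forall k : nat, (k <= q)%N ->
     exists2 s, @Sk R q k s &
       forall t, @Tk R q k t -> (ffun L X lam delta s <= ffun L X lam delta t)%E).
Proof.
move=> L2 _ _ hess_le.
have open_cube_sub (t : 'cV[R]_q) : open_cube t -> closed_cube t.
  by move=> t_in j; have /andP[t0 t1] := t_in j; rewrite !ltW.
have Tk_sub k (t : 'cV[R]_q) : Tk k t -> closed_cube t by case.
have h_concave (S : set 'cV[R]_q) : (forall t, S t -> closed_cube t) ->
    forall b0 b, concave_on S (fun t => hfun L X lam delta t b0 b).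
  by move=> S_sub b0 b x y a Sx Sy; apply: hfun_concave => //; apply: S_sub.
have f_concave (S : set 'cV[R]_q) : (forall t, S t -> closed_cube t) ->
    econcave_on S (ffun L X lam delta).
  by move=> S_sub; apply: ereal_inf_concave => -[b0 b]; exact: h_concave.
split; first exact: h_concave open_cube_sub.
split; first exact: f_concave open_cube_sub.
split; first by move=> k; exact: f_concave (Tk_sub k).
by move=> k le_kq; apply: concave_min_Sk => //; exact: f_concave (Tk_sub k).
Qed.
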